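(* Let $V$ be a finite-dimensional real inner product space with unit sphere $S$, let $M\subset V$ be a lattice with $M\otimes_{\mathbf Z}\mathbf R=V$ such that the inner product takes integral values on $M\times M$, let $\sigma\subset V$ be a rational polyhedral cone with respect to $M$, and let $f:V\to\mathbf R$ be a linear functional taking integral values on $M$. If $f$ takes a negative value on $\sigma$ and attains its minimum on $S\cap\sigma$ at $s$, then the ray $\mathbf R_{>0}\cdot s$ contains a unique nonzero indivisible lattice point of $M$.
   Context: A polyhedral cone is a finite intersection of half-spaces $\{g\ge0\}$ with $g$ linear; it is rational with respect to $M$ if it can be cut out by half-spaces defined by linear functionals taking integral values on $M$. A lattice point $m\in M$ is indivisible if $m=Nm'$ with $N\in\mathbf N$, $m'\in M$ implies $N=1$. *)

From HB Require Import structures.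
From mathcomp Require Import all_boot all_order all_algebra.
From mathcomp Require Import reals.
Set Implicit Arguments. Unset Strict Implicit. Unset Printing Implicit Defensive.
Import Order.TTheory GRing.Theory Num.Theory.
Local Open Scope ring_scope.

Definition ipG {R : realType} {n : nat} (G : 'M[R]_n) (x y : 'rV[R]_n) : R :=
  (x *m G *m y^T) 0 0.

Definition is_inner_product {R : realType} {n : nat} (G : 'M[R]_n) : Prop :=
  G^T = G /\ forall x : 'rV[R]_n, x != 0 -> 0 < ipG G x x.

(* The lattice M spanned by the rows of an invertible matrix B
   (so that M (x)_Z R = V). *)
Definition in_lattice {R : realType} {n : nat} (B : 'M[R]_n) (x : 'rV[R]_n) : Prop :=
  exists z : 'rV[int]_n, x = map_mx (fun k : int => k%:~R) z *m B.

Definition lfun {R : realType} {n : nat} (c : 'cV[R]_n) (x : 'rV[R]_n) : R :=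
  (x *m c) 0 0.

Definition integral_on_lattice {R : realType} {n : nat} (B : 'M[R]_n)
  (c : 'cV[R]_n) : Prop :=
  forall m, in_lattice B m -> lfun c m \is a Num.int.

Definition in_cone {R : realType} {n k : nat} (C : 'M[R]_(n, k)) (x : 'rV[R]_n) : Prop :=
  forall j : 'I_k, 0 <= lfun (col j C) x.

Definition rational_cone_data {R : realType} {n k : nat} (B : 'M[R]_n)
  (C : 'M[R]_(n, k)) : Prop :=
  forall j : 'I_k, integral_on_lattice B (col j C).

Definition in_unit_sphere {R : realType} {n : nat} (G : 'M[R]_n) (x : 'rV[R]_n) : Prop :=
  ipG G x x = 1.

Definition indivisible {R : realType} {n : nat} (B : 'M[R]_n) (m : 'rV[R]_n) : Prop :=
  forall (N : nat) (m' : 'rV[R]_n), in_lattice B m' -> m = N%:R *: m' -> N = 1%N.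

From HB Require Import structures.
From mathcomp Require Import all_boot all_order all_algebra.
From mathcomp Require Import reals.
From mathcomp Require Import ring lra.
Set Implicit Arguments. Unset Strict Implicit. Unset Printing Implicit Defensive.
Import Order.TTheory GRing.Theory Num.Theory.
Local Open Scope ring_scope.

(* Let lam = f(s) < 0.  Perturbing s inside the cone shows that on the linear
   span L of the face of the cone containing s (where the constraints active at
   s vanish), f coincides with lam <s, .>.  So lam s is the representative of
   f|L for the inner product; in lattice coordinates the Gram matrix, f and the
   constraints are integral, hence this representative solves a rational linear
   system with a unique solution and has rational coordinates.  The ray through
   a rational point contains exactly one indivisible lattice point, namely the
   integer vector p on it with gcd 1; a Bezout relation sum_i a_i p_i = 1 shows
   that every lattice point on the ray is a natural multiple of p. *)

Section Forms.
Variables (R : realType) (n : nat).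
Implicit Types (G : 'M[R]_n) (c : 'cV[R]_n) (x y z : 'rV[R]_n) (a : R).

Lemma ipGDl G x y z : ipG G (x + y) z = ipG G x z + ipG G y z.
Proof. by rewrite /ipG !mulmxDl mxE. Qed.

Lemma ipGDr G x y z : ipG G x (y + z) = ipG G x y + ipG G x z.
Proof. by rewrite /ipG linearD /= mulmxDr mxE. Qed.

Lemma ipGZl G a x z : ipG G (a *: x) z = a * ipG G x z.
Proof. by rewrite /ipG -!scalemxAl mxE. Qed.

Lemma ipGZr G a x z : ipG G x (a *: z) = a * ipG G x z.
Proof. by rewrite /ipG linearZ /= -scalemxAr mxE. Qed.

Lemma ipG0l G z : ipG G 0 z = 0.
Proof. by rewrite /ipG !mul0mx mxE. Qed.

Lemma ipGC G x y : G^T = G -> ipG G x y = ipG G y x.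
Proof.
move=> GT; rewrite /ipG -[in RHS]GT.
have -> : y *m G^T *m x^T = (x *m G *m y^T)^T by rewrite !trmx_mul trmxK mulmxA.
by rewrite [RHS]mxE.
Qed.

Lemma lfunD c x y : lfun c (x + y) = lfun c x + lfun c y.
Proof. by rewrite /lfun mulmxDl mxE. Qed.

Lemma lfunZ c a x : lfun c (a *: x) = a * lfun c x.
Proof. by rewrite /lfun -scalemxAl mxE. Qed.

Lemma lfun0 c : lfun c 0 = 0.
Proof. by rewrite /lfun mul0mx mxE. Qed.

Lemma lfun_col k (C : 'M[R]_(n, k)) j x : lfun (col j C) x = (x *m C) 0 j.
Proof. by rewrite /lfun colE mulmxA -colE mxE. Qed.

Lemma unit_sphere_neq0 G x : in_unit_sphere G x -> x != 0.
Proof.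
by apply: contra_eqN => /eqP ->; rewrite /in_unit_sphere ipG0l eq_sym oner_eq0.
Qed.

End Forms.

Definition in_face_span {R : realType} {n k : nat} (C : 'M[R]_(n, k))
  (s y : 'rV[R]_n) : Prop :=
  forall j, lfun (col j C) s = 0 -> lfun (col j C) y = 0.

Lemma in_face_spanD (R : realType) n k (C : 'M[R]_(n, k)) s y z :
  in_face_span C s y -> in_face_span C s z -> in_face_span C s (y + z).
Proof. by move=> hy hz j hj; rewrite lfunD hy ?hz ?addr0. Qed.

Lemma in_face_spanZ (R : realType) n k (C : 'M[R]_(n, k)) s a y :
  in_face_span C s y -> in_face_span C s (a *: y).
Proof. by move=> hy j hj; rewrite lfunZ hy ?mulr0. Qed.

Lemma in_coneZ (R : realType) n k (C : 'M[R]_(n, k)) a x :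
  0 <= a -> in_cone C x -> in_cone C (a *: x).
Proof. by move=> a0 hx j; rewrite lfunZ mulr_ge0. Qed.

Lemma feasible_small_step (R : realFieldType) k (a b : 'I_k -> R) e1 :
  0 < e1 -> (forall j, 0 <= a j) -> (forall j, a j = 0 -> b j = 0) ->
  exists2 e, 0 < e & e <= e1 /\ forall j, 0 <= a j + e * b j.
Proof.
move=> e1_gt0 a_ge0 ab.
set S := \sum_j `|b j| / a j.
have S_ge0 : 0 <= S by apply: sumr_ge0 => j _; rewrite divr_ge0.
have den_gt0 : 0 < 1 + e1 * S by rewrite ltr_pwDl // mulr_ge0 // ltW.
set e := e1 / (1 + e1 * S).
have e_gt0 : 0 < e by rewrite divr_gt0.
have eS_le1 : e * S <= 1 by rewrite mulrAC ler_pdivrMr // mul1r lerDr.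
exists e => //; split.
  by rewrite ler_pdivrMr // ler_peMr ?(ltW e1_gt0) // lerDl mulr_ge0 // ltW.
move=> j; have [aj0|ajn] := eqVneq (a j) 0; first by rewrite aj0 (ab _ aj0) mulr0 addr0.
have aj_gt0 : 0 < a j by rewrite lt_def ajn a_ge0.
have : e * (`|b j| / a j) <= 1.
  apply: le_trans eS_le1; rewrite ler_pM2l //.
  by rewrite /S (bigD1 j) //= lerDl sumr_ge0 // => i _; rewrite divr_ge0.
rewrite mulrA ler_pdivrMr // mul1r => ebj.
have : - (e * `|b j|) <= e * b j by rewrite -mulrN ler_pM2l // lerNl ler_normr lexx orbT.
lra.
Qed.

Section Minimizer.
Variables (R : realType) (n k : nat).
Variables (G : 'M[R]_n) (C : 'M[R]_(n, k)) (c : 'cV[R]_n) (s : 'rV[R]_n).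
Hypothesis G_ip : is_inner_product G.
Hypothesis s_min :
  forall y, in_unit_sphere G y -> in_cone C y -> lfun c s <= lfun c y.

Lemma lfun_min_le x : x != 0 -> in_cone C x ->
  lfun c s * Num.sqrt (ipG G x x) <= lfun c x.
Proof.
move=> xn0 xC; have q_gt0 := G_ip.2 x xn0.
set r := Num.sqrt _; have r_gt0 : 0 < r by rewrite sqrtr_gt0.
have ux : in_unit_sphere G (r^-1 *: x).
  rewrite /in_unit_sphere ipGZl ipGZr mulrA -expr2 exprVn sqr_sqrtr ?ltW //.
  by rewrite mulVf ?gt_eqF.
have r_inv_ge0 : 0 <= r^-1 by rewrite invr_ge0 ltW.
have := s_min ux (in_coneZ r_inv_ge0 xC).
by rewrite lfunZ ler_pdivlMl // mulrC.
Qed.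

Lemma lfun_min_lt0 : (exists x, in_cone C x /\ lfun c x < 0) -> lfun c s < 0.
Proof.
move=> [x [xC fx_lt0]].
have xn0 : x != 0 by apply: contraTneq fx_lt0 => ->; rewrite lfun0 ltxx.
have r_gt0 : 0 < Num.sqrt (ipG G x x) by rewrite sqrtr_gt0 G_ip.2.
by rewrite -(pmulr_llt0 _ r_gt0); apply: le_lt_trans (lfun_min_le xn0 xC) _.
Qed.

Lemma lfun_min_sqr x : in_cone C x -> lfun c x < 0 ->
  lfun c x ^+ 2 <= lfun c s ^+ 2 * ipG G x x.
Proof.
move=> xC fx_lt0.
have xn0 : x != 0 by apply: contraTneq fx_lt0 => ->; rewrite lfun0 ltxx.
have q_ge0 : 0 <= ipG G x x by rewrite ltW ?G_ip.2.
have := lfun_min_le xn0 xC; rewrite -[in X in _ <= _ * X](sqr_sqrtr q_ge0).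
move: (Num.sqrt _) => r; nra.
Qed.

Hypotheses (s_unit : in_unit_sphere G s) (s_cone : in_cone C s).
Hypothesis lam_lt0 : lfun c s < 0.

Lemma lfun_face_orth_ge0 y : in_face_span C s y -> ipG G s y = 0 -> 0 <= lfun c y.
Proof.
(* Along s + e y, f drops at first order in e while the norm grows only at
   second order, which contradicts the minimality of s for small e > 0. *)
move=> ys sy; rewrite leNgt; apply/negP => fy_lt0.
set q := ipG G y y.
have q_ge0 : 0 <= q.
  by rewrite /q; have [->|/G_ip.2/ltW//] := eqVneq y 0; rewrite ipG0l.
have lam_l_gt0 : 0 < lfun c s * lfun c y by rewrite nmulr_rgt0.
have den_gt0 : 0 < lfun c s ^+ 2 * q + 1 by rewrite ltr_wpDl // mulr_ge0 ?sqr_ge0.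
have [e e_gt0 [e_le hC]] :=
  feasible_small_step (divr_gt0 lam_l_gt0 den_gt0) (fun j => s_cone j) ys.
set x := s + e *: y.
have xC : in_cone C x by move=> j; rewrite lfunD lfunZ.
have fx : lfun c x = lfun c s + e * lfun c y by rewrite lfunD lfunZ.
have fx_lt0 : lfun c x < 0 by rewrite fx; nra.
have qx : ipG G x x = 1 + e ^+ 2 * q.
  rewrite ipGDl !ipGDr !ipGZl !ipGZr s_unit sy (ipGC _ _ G_ip.1) sy -/q; ring.
have := lfun_min_sqr xC fx_lt0; rewrite fx qx.
move: e_le; rewrite ler_pdivlMr // => e_le.
have := ler_wpM2l (ltW e_gt0) e_le.
nra.
Qed.

Lemma lfun_face_span y : in_face_span C s y -> lfun c y = lfun c s * ipG G s y.
Proof.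
move=> ys; set a := ipG G s y.
set y' := y + (- a) *: s.
have y's : in_face_span C s y' by apply: in_face_spanD ys (in_face_spanZ _ _).
have sy' : ipG G s y' = 0 by rewrite ipGDr ipGZr s_unit mulr1 addrN.
have := lfun_face_orth_ge0 y's sy'.
have := lfun_face_orth_ge0 (in_face_spanZ (-1) y's); rewrite ipGZr sy' mulr0.
rewrite lfunZ lfunD lfunZ => /(_ erefl); lra.
Qed.

End Minimizer.

Definition rational_mx {R : numFieldType} {m p : nat} (A : 'M[R]_(m, p)) : Prop :=
  exists A0 : 'M[rat]_(m, p), A = map_mx ratr A0.

Lemma rational_mx_int (R : archiRealFieldType) m p (A : 'M[R]_(m, p)) :
  (forall i j, A i j \is a Num.int) -> rational_mx A.
Proof.
move=> A_int; exists (\matrix_(i, j) (Num.floor (A i j))%:~R).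
by apply/matrixP => i j; rewrite !mxE ratr_int floorK.
Qed.

Section RationalSolutions.
Variables (R : numFieldType) (n : nat).

Lemma rational_solution p (A0 : 'M[rat]_(n, p)) (b0 : 'rV[rat]_p) (w : 'rV[R]_n) :
  row_free A0 -> w *m map_mx ratr A0 = map_mx ratr b0 -> rational_mx w.
Proof.
move=> A0_free wA.
have b0A0 : (b0 <= A0)%MS.
  by rewrite -(map_submx (ratr : rat -> R)); apply/submxP; exists w.
have A_free : row_free (map_mx (ratr : rat -> R) A0) by rewrite row_free_map.
exists (b0 *m pinvmx A0); apply: (row_free_inj A_free).
by rewrite wA -map_mxM mulmxKpV.
Qed.

Lemma rational_kernel_representative p (Q : 'M[R]_n) (D : 'M[R]_(n, p))
    (d : 'cV[R]_n) (w : 'rV[R]_n) :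
  rational_mx Q -> rational_mx D -> rational_mx d ->
  (forall u : 'rV[R]_n, u != 0 -> 0 < (u *m Q *m u^T) 0 0) ->
  w *m D = 0 -> (forall y : 'rV[R]_n, y *m D = 0 -> y *m d = y *m Q *m w^T) ->
  rational_mx w.
Proof.
(* With K the kernel matrix of D, w solves w [D | Q^T K^T] = [0 | (K d)^T],
   a rational system that has at most one solution since Q is definite. *)
move=> [Q0 ->] [D0 ->] [d0 ->] Q_pos wD wd.
set K0 := kermx D0; pose K : 'M[R]_n := map_mx ratr K0.
have KE : K = kermx (map_mx ratr D0) := map_kermx ratr D0.
have KQw : K *m map_mx ratr d0 = K *m map_mx ratr Q0 *m w^T.
  apply/row_matrixP => i; rewrite !row_mul; apply: wd.
  by rewrite -row_mul KE mulmx_ker row0.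
apply: (@rational_solution _ (row_mx D0 (Q0^T *m K0^T)) (row_mx 0 (K0 *m d0)^T)).
  rewrite -(row_free_map (ratr : rat -> R)); apply/inj_row_free => v.
  rewrite map_row_mx mul_mx_row -row_mx0 => /eq_row_mx [vD vQK].
  have /submxP [z vE] : (v <= K)%MS by rewrite KE sub_kermx vD.
  have vQv : v *m map_mx ratr Q0 *m v^T = 0.
    apply: trmx_inj; rewrite trmx0 !trmx_mul trmxK mulmxA {2}vE trmx_mul mulmxA.
    by move: vQK; rewrite map_mxM !map_trmx mulmxA => ->; rewrite mul0mx.
  by apply/eqP; apply: contraT => vn0; have := Q_pos v vn0; rewrite vQv mxE ltxx.
rewrite !map_row_mx mul_mx_row wD map_mx0; congr row_mx.
rewrite -map_trmx [in RHS]map_mxM -/K KQw map_mxM -!map_trmx -/K.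
by rewrite !trmx_mul trmxK mulmxA.
Qed.

End RationalSolutions.

Definition primitive_vec {n : nat} (p : 'rV[int]_n) : Prop :=
  exists a : 'I_n -> int, \sum_i a i * p 0 i = 1.

Lemma primitive_vecN n (p : 'rV[int]_n) : primitive_vec p -> primitive_vec (- p).
Proof.
move=> [a sum_ap]; exists (fun i => - a i); rewrite -sum_ap.
by apply: eq_bigr => i _; rewrite mxE mulrNN.
Qed.

Lemma bezout_vec n (v : 'I_n -> int) :
  exists g : int, exists2 a : 'I_n -> int, g = \sum_i a i * v i & forall i, (g %| v i)%Z.
Proof.
elim: n v => [|n IHn] v; first by exists 0, (fun _ => 0); [rewrite big_ord0 | case].
have [g' [a' ->] g'_dvd] := IHn (fun i => v (lift ord0 i)).
have [u [w uw]] := Bezoutz (\sum_i a' i * v (lift ord0 i)) (v ord0).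
exists (gcdz (\sum_i a' i * v (lift ord0 i)) (v ord0)).
  exists (fun i => if unlift ord0 i is Some j then u * a' j else w).
  rewrite big_ord_recl unlift_none -uw mulr_sumr addrC; congr (_ + _).
  by apply: eq_bigr => j _; rewrite liftK mulrA.
move=> i; case: (unliftP ord0 i) => [j ->|->]; last exact: dvdz_gcdr.
exact: dvdz_trans (dvdz_gcdl _ _) (g'_dvd j).
Qed.

Lemma rat_vec_clear_den n (v0 : 'rV[rat]_n) :
  exists2 N : int, N != 0 & exists v1 : 'rV[int]_n, map_mx intr v1 = N%:~R *: v0.
Proof.
exists (\prod_i denq (v0 0 i)).
  by apply/prodf_neq0 => i _; rewrite denq_neq0.
exists (\row_i (numq (v0 0 i) * \prod_(j | j != i) denq (v0 0 j))).
apply/rowP => i; rewrite !mxE [\prod_i _](bigD1 i) //= !intrM numqE; ring.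
Qed.

Lemma rat_vec_primitive n (v0 : 'rV[rat]_n) : v0 != 0 ->
  exists2 p : 'rV[int]_n, primitive_vec p &
    exists2 q : rat, q != 0 & v0 = q *: map_mx intr p.
Proof.
move=> v0n0.
have [N Nn0 [v1 v1E]] := rat_vec_clear_den v0.
have [g [a g_sum g_dvd]] := bezout_vec (fun i => v1 0 i).
have NR_n0 : (N%:~R : rat) != 0 by rewrite intr_eq0.
have v0E : v0 = N%:~R^-1 *: map_mx intr v1 by rewrite v1E scalerA mulVf ?scale1r.
have gn0 : g != 0.
  apply: contraNneq v0n0 => g0; apply/eqP; rewrite v0E; apply/rowP => i.
  by move: (g_dvd i); rewrite g0 dvd0z => /eqP v1i; rewrite !mxE v1i mulr0.
pose p := \row_i divz (v1 0 i) g.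
have v1_gp i : v1 0 i = g * p 0 i by rewrite mxE mulrC divzK.
clearbody p.
exists p.
  exists a; apply: (mulfI gn0); rewrite mulr1 {2}g_sum mulr_sumr.
  by apply: eq_bigr => i _; rewrite v1_gp mulrCA.
exists (g%:~R / N%:~R).
  by rewrite mulf_neq0 ?invr_eq0 ?intr_eq0.
by rewrite v0E mulrC -scalerA; congr (_ *: _); apply/rowP => i; rewrite !mxE v1_gp intrM.
Qed.

Lemma rat_ray_primitive (R : realFieldType) n (v0 : 'rV[rat]_n) (t : R) :
  v0 != 0 -> t != 0 ->
  exists2 p : 'rV[int]_n, primitive_vec p &
    exists2 t', 0 < t' & t *: map_mx ratr v0 = t' *: map_mx intr p.
Proof.
move=> v0_n0 t_n0; have [p p_prim [q q_n0 ->]] := rat_vec_primitive v0_n0.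
have tq_n0 : t * ratr q != 0 by rewrite mulf_neq0 ?fmorph_eq0.
have -> : t *: map_mx ratr (q *: map_mx intr p) = (t * ratr q) *: map_mx intr p.
  by rewrite map_mxZ scalerA; congr (_ *: _); apply/rowP => i; rewrite !mxE rmorph_int.
have [tq_gt0|tq_le0] := ltrP 0 (t * ratr q); first by exists p => //; exists (t * ratr q).
exists (- p); first exact: primitive_vecN.
exists (- (t * ratr q)); first by rewrite oppr_gt0 lt_neqAle tq_n0.
by rewrite map_mxN scalerN scaleNr opprK.
Qed.

Section LatticeRay.
Variables (R : realType) (n : nat) (B : 'M[R]_n).
Hypothesis B_unit : B \in unitmx.

Let mulB_inj : injective (fun u : 'rV[R]_n => u *m B) := can_inj (mulmxK B_unit).

Lemma primitive_multiple_nat (p z : 'rV[int]_n) (r : R) :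
  primitive_vec p -> map_mx intr z = r *: map_mx intr p -> 0 <= r -> r \is a Num.nat.
Proof.
move=> [a sum_ap] zE r_ge0; rewrite natrEint r_ge0 andbT.
have -> : r = (\sum_i a i * z 0 i)%:~R.
  rewrite -[LHS]mulr1 -[1 in LHS]/((1 : int)%:~R) -sum_ap !rmorph_sum mulr_sumr.
  apply: eq_bigr => i _; have /rowP/(_ i) := zE; rewrite !mxE => zi.
  by rewrite !rmorphM /= zi mulrCA.
exact: intr_int.
Qed.

Lemma primitive_indivisible (p : 'rV[int]_n) :
  primitive_vec p -> indivisible B (map_mx intr p *m B).
Proof.
move=> [a sum_ap] N _ [z ->]; rewrite scalemxAl => /mulB_inj pE.
have pEi i : p 0 i = N%:Z * z 0 i.
  by apply: (@intr_inj R); have /rowP/(_ i) := pE; rewrite !mxE intrM.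
have : (N%:Z %| 1)%Z.
  apply/dvdzP; exists (\sum_i a i * z 0 i); rewrite -[LHS]sum_ap mulr_suml.
  by apply: eq_bigr => i _; rewrite pEi mulrCA mulrC.
by rewrite dvdz1 => /eqP.
Qed.

Lemma rational_ray_indivisible_unique (s : 'rV[R]_n) (t : R) (v0 : 'rV[rat]_n) :
  s != 0 -> s = t *: (map_mx ratr v0 *m B) ->
  exists! m : 'rV[R]_n,
    [/\ in_lattice B m, m != 0, indivisible B m & exists2 t : R, 0 < t & m = t *: s].
Proof.
move=> s_n0 sE.
have v0_n0 : v0 != 0.
  by apply: contraNneq s_n0 => v00; rewrite sE v00 map_mx0 mul0mx scaler0.
have t_n0 : t != 0 by apply: contraNneq s_n0 => t0; rewrite sE t0 scale0r.
have [p p_prim [t' t'_gt0 tE]] := rat_ray_primitive v0_n0 t_n0.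
move: sE; rewrite scalemxAl tE -scalemxAl => {t_n0 v0_n0 tE}sE.
exists (map_mx intr p *m B); split.
  split; [by exists p | | exact: primitive_indivisible | ].
  - by apply: contraNneq s_n0 => p0; rewrite sE p0 scaler0.
  - exists t'^-1; first by rewrite invr_gt0.
    by rewrite sE scalerA mulVf ?scale1r ?gt_eqF.
move=> _ [[z ->] _ m_ind [r r_gt0 mE]].
have zE : map_mx intr z = (r * t') *: map_mx intr p.
  by apply: mulB_inj; rewrite /= -scalemxAl -scalerA -sE.
have /natrP [N rtE] := primitive_multiple_nat p_prim zE (ltW (mulr_gt0 r_gt0 t'_gt0)).
have N1 : N = 1%N.
  by apply: (m_ind N (map_mx intr p *m B)); [exists p | rewrite scalemxAl -rtE -zE].
by rewrite zE rtE N1 scale1r.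
Qed.

End LatticeRay.

Definition active_mx {R : realType} {n k : nat} (C : 'M[R]_(n, k)) (s : 'rV[R]_n) :
  'M[R]_(n, k) :=
  C *m diag_mx (\row_j (lfun (col j C) s == 0)%:R).

Lemma active_mxP (R : realType) n k (C : 'M[R]_(n, k)) s x :
  x *m active_mx C s = 0 <-> in_face_span C s x.
Proof.
rewrite /active_mx mulmxA mul_mx_diag; split.
  move=> x0 j sj; have /matrixP/(_ 0 j) := x0.
  by rewrite mxE -lfun_col mxE sj eqxx mulr1 mxE.
move=> xs; apply/matrixP => i j; rewrite (ord1 i) mxE -lfun_col mxE [RHS]mxE.
by case: eqP => [/xs->|_]; rewrite ?mul0r ?mulr0n ?mulr0.
Qed.

Section Coordinates.
Variables (R : realType) (n : nat) (B : 'M[R]_n).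

Lemma in_lattice_delta i : in_lattice B (delta_mx 0 i *m B).
Proof.
exists (delta_mx 0 i); congr (_ *m B).
by apply/matrixP => i' j; rewrite !mxE; case: (_ == _); case: (_ == _).
Qed.

Lemma coord_lfun_int (c : 'cV[R]_n) :
  integral_on_lattice B c -> forall i j, (B *m c) i j \is a Num.int.
Proof.
move=> c_int i j; rewrite (ord1 j).
by have := c_int _ (in_lattice_delta i); rewrite /lfun -mulmxA -rowE mxE.
Qed.

Lemma ipG_coord (G : 'M[R]_n) u v :
  ipG G (u *m B) (v *m B) = ipG (B *m G *m B^T) u v.
Proof. by rewrite /ipG trmx_mul !mulmxA. Qed.

Lemma gram_int (G : 'M[R]_n) :
  (forall m1 m2, in_lattice B m1 -> in_lattice B m2 -> ipG G m1 m2 \is a Num.int) ->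
  forall i j, (B *m G *m B^T) i j \is a Num.int.
Proof.
move=> G_int i j; have := G_int _ _ (in_lattice_delta i) (in_lattice_delta j).
by rewrite ipG_coord /ipG -rowE trmx_delta -colE !mxE.
Qed.

Lemma active_mx_int k (C : 'M[R]_(n, k)) s :
  rational_cone_data B C -> forall i j, (B *m active_mx C s) i j \is a Num.int.
Proof.
move=> C_int i j; rewrite /active_mx mulmxA mul_mx_diag mxE [(\row__ _) 0 j]mxE.
apply: rpredM; last exact: natr_int.
by have := coord_lfun_int (C_int j) i 0; rewrite colE mulmxA -colE mxE.
Qed.

End Coordinates.

Lemma minimizer_rational_coords (R : realType) n k (G B : 'M[R]_n) (C : 'M[R]_(n, k))
    (c : 'cV[R]_n) (s : 'rV[R]_n) :
  is_inner_product G -> B \in unitmx ->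
  (forall m1 m2, in_lattice B m1 -> in_lattice B m2 -> ipG G m1 m2 \is a Num.int) ->
  rational_cone_data B C -> integral_on_lattice B c ->
  in_unit_sphere G s -> in_cone C s ->
  (forall y, in_unit_sphere G y -> in_cone C y -> lfun c s <= lfun c y) ->
  lfun c s < 0 ->
  rational_mx (lfun c s *: (s *m invmx B)).
Proof.
move=> G_ip B_unit G_int C_int c_int s_unit s_cone s_min lam_lt0.
have wB : lfun c s *: (s *m invmx B) *m B = lfun c s *: s by rewrite -scalemxAl mulmxKV.
apply: (rational_kernel_representative (Q := B *m G *m B^T) (D := B *m active_mx C s)
                                       (d := B *m c)).
- exact/rational_mx_int/gram_int.
- exact/rational_mx_int/active_mx_int.
- exact/rational_mx_int/coord_lfun_int.
- move=> u u_n0; rewrite -[_ 0 0]/(ipG _ u u) -ipG_coord G_ip.2 //.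
  by apply: contraNneq u_n0 => uB0; rewrite -(mulmxK B_unit u) uB0 mul0mx.
- by rewrite mulmxA wB; apply/active_mxP/in_face_spanZ.
move=> y; rewrite mulmxA => /active_mxP ys; apply/matrixP => i j; rewrite !ord1.
rewrite -[RHS]/(ipG _ y _) -ipG_coord wB ipGZr (ipGC _ _ G_ip.1).
by rewrite -(lfun_face_span G_ip s_min s_unit s_cone lam_lt0 ys) /lfun mulmxA.
Qed.

Theorem corollary2p3 (R : realType) (n k : nat)
  (G : 'M[R]_n) (B : 'M[R]_n) (C : 'M[R]_(n, k)) (c : 'cV[R]_n) (s : 'rV[R]_n) :
  is_inner_product G ->
  B \in unitmx ->
  (forall m1 m2, in_lattice B m1 -> in_lattice B m2 -> ipG G m1 m2 \is a Num.int) ->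
  rational_cone_data B C ->
  integral_on_lattice B c ->
  (exists x, in_cone C x /\ lfun c x < 0) ->
  in_unit_sphere G s -> in_cone C s ->
  (forall y, in_unit_sphere G y -> in_cone C y -> lfun c s <= lfun c y) ->
  exists! m : 'rV[R]_n,
    [/\ in_lattice B m, m != 0, indivisible B m &
        exists2 t : R, 0 < t & m = t *: s].
Proof.
move=> G_ip B_unit G_int C_int c_int f_neg s_unit s_cone s_min.
have lam_lt0 := lfun_min_lt0 G_ip s_min f_neg.
have [w0 w0E] := minimizer_rational_coords G_ip B_unit G_int C_int c_int
                   s_unit s_cone s_min lam_lt0.
apply: (rational_ray_indivisible_unique B_unit (unit_sphere_neq0 s_unit)
          (t := (lfun c s)^-1) (v0 := w0)).
by rewrite -w0E -scalemxAl mulmxKV // scalerA mulVf ?scale1r // lt_eqF.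
Qed.
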